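(* Let $\lambda\in[-1,1/d)$ and let $\gamma:I\to\mathbb{R}^d$ be a continuous $\lambda$-curve. Then there exists $\rho>0$ such that for every $t\in I$ and every $q\in\mathrm{sec}^+(t)$ there exists $\xi_t\in\mathbb{S}^{d-1}$ with $\langle\xi_t,u\rangle\le-\rho$ for all $u\in K(t)$ with $\|u\|=1$, and $\langle\xi_t,q\rangle\ge\rho$.
   Context: $\mathbb{R}^d$ carries the Euclidean inner product $\langle\cdot,\cdot\rangle$ and norm $\|\cdot\|$; $I\subset\mathbb{R}$ is an interval; $\mathbb{S}^{d-1}$ the unit sphere. $\gamma$ is a $\lambda$-curve if for all $t_1\le t_2\le t_3$ in $I$: $\|\gamma(t_1)-\gamma(t_2)\|\le\|\gamma(t_1)-\gamma(t_3)\|+\lambda\|\gamma(t_2)-\gamma(t_3)\|$. $K(t)$ is the closed convex cone generated by $\{\gamma(t')-\gamma(t): t'\in I, t'\le t\}$. $\mathrm{sec}^+(t)=\{q\in\mathbb{S}^{d-1}: q=\lim_k\frac{\gamma(t_k)-\gamma(t)}{\|\gamma(t_k)-\gamma(t)\|}$ for some $t_k\to t$, $t_k>t\}$. *)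

From HB Require Import structures.
From mathcomp Require Import all_boot all_order all_algebra.
From mathcomp Require Import reals.
Set Implicit Arguments. Unset Strict Implicit. Unset Printing Implicit Defensive.
Import Order.TTheory GRing.Theory Num.Theory.
Local Open Scope ring_scope.

Section Defs.
Variables (R : realType) (d : nat).
Notation vec := 'rV[R]_d.

Definition dotv (u v : vec) : R := \sum_(i < d) u 0 i * v 0 i.
Definition enorm (u : vec) : R := Num.sqrt (dotv u u).

Definition on_sphere (q : vec) : Prop := enorm q = 1.

Definition is_interval_set (I : R -> Prop) : Prop :=
  forall x y z, I x -> I z -> x <= y -> y <= z -> I y.

Definition continuous_on (I : R -> Prop) (gamma : R -> vec) : Prop :=
  forall t, I t -> forall eps, 0 < eps -> exists2 delta, 0 < delta &
    forall s, I s -> `|s - t| < delta -> enorm (gamma s - gamma t) < eps.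

Definition lambda_curve (lam : R) (I : R -> Prop) (gamma : R -> vec) : Prop :=
  forall t1 t2 t3, I t1 -> I t2 -> I t3 -> t1 <= t2 -> t2 <= t3 ->
    enorm (gamma t1 - gamma t2)
      <= enorm (gamma t1 - gamma t3) + lam * enorm (gamma t2 - gamma t3).

Definition cone_hull (S : vec -> Prop) (u : vec) : Prop :=
  exists n (c : 'I_n -> R) (v : 'I_n -> vec),
    (forall i, 0 <= c i) /\ (forall i, S (v i)) /\ u = \sum_(i < n) c i *: v i.

Definition eclosure (S : vec -> Prop) (u : vec) : Prop :=
  forall eps, 0 < eps -> exists2 w, S w & enorm (u - w) < eps.

Definition Kcone (I : R -> Prop) (gamma : R -> vec) (t : R) : vec -> Prop :=
  eclosure (cone_hull (fun v => exists t', [/\ I t', t' <= t & v = gamma t' - gamma t])).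

Definition sec_plus (I : R -> Prop) (gamma : R -> vec) (t : R) (q : vec) : Prop :=
  on_sphere q /\
  exists tk : nat -> R,
    (forall k, I (tk k) /\ t < tk k /\ gamma (tk k) != gamma t) /\
    (forall eps, 0 < eps -> exists N, forall k, (N <= k)%N -> `|tk k - t| < eps) /\
    (forall eps, 0 < eps -> exists N, forall k, (N <= k)%N ->
       enorm ((enorm (gamma (tk k) - gamma t))^-1 *: (gamma (tk k) - gamma t) - q) < eps).

End Defs.

From HB Require Import structures.
From mathcomp Require Import all_boot all_order all_algebra.
From mathcomp Require Import classical_sets reals.
From mathcomp Require Import ring lra.
Import Order.TTheory GRing.Theory Num.Theory.
Local Open Scope ring_scope.
Set Implicit Arguments. Unset Strict Implicit. Unset Printing Implicit Defensive.

(* Fix t and q in sec^+(t), and let U consist of -q and the unit chord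
   directions (gamma t' - gamma t)/|gamma t' - gamma t|, t' <= t.  The
   lambda-inequality with t3 = t bounds the angle between two chord
   directions, and with t1 = t' <= t2 = t <= t3 -> t+ it gives <u, q> <= lam;
   so all inner products within U are >= -lam.  For such a family of unit
   vectors, every convex combination b = sum_p a_p v_p satisfies
   |b|^2 >= margin := (1/d - lam)/(1 - lam): with M = sum_p a_p v_p^T v_p,
   1 = (tr M)^2 <= d |M|_F^2 = d sum_{p,q} a_p a_q <v_p, v_q>^2
     <= d ((1 - lam) |b|^2 + lam).
   An approximate minimiser m of the norm on the convex hull of U then has
   <m, x> >= margin/2 on U, and xi = -m/|m| works with rho = margin/2, the
   bound passing from chord directions to the closed cone K(t) by linearity
   and continuity. *)

Section Euclid.
Variables (R : realType) (d : nat).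
Notation vec := 'rV[R]_d.
Implicit Types (u v w a b m : vec) (c lam rho : R).

Lemma dotvC u v : dotv u v = dotv v u.
Proof. by apply: eq_bigr => i _; rewrite mulrC. Qed.

Lemma dotvDl u v w : dotv (u + v) w = dotv u w + dotv v w.
Proof. by rewrite /dotv -big_split; apply: eq_bigr => i _; rewrite mxE mulrDl. Qed.

Lemma dotvZl c u v : dotv (c *: u) v = c * dotv u v.
Proof. by rewrite /dotv mulr_sumr; apply: eq_bigr => i _; rewrite mxE mulrA. Qed.

Lemma dotvNl u v : dotv (- u) v = - dotv u v.
Proof. by rewrite -scaleN1r dotvZl mulN1r. Qed.

Lemma dotvBl u v w : dotv (u - v) w = dotv u w - dotv v w.
Proof. by rewrite dotvDl dotvNl. Qed.

Lemma dotvDr u v w : dotv u (v + w) = dotv u v + dotv u w.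
Proof. by rewrite dotvC dotvDl !(dotvC u). Qed.

Lemma dotvZr c u v : dotv u (c *: v) = c * dotv u v.
Proof. by rewrite dotvC dotvZl dotvC. Qed.

Lemma dotvNr u v : dotv u (- v) = - dotv u v.
Proof. by rewrite dotvC dotvNl dotvC. Qed.

Lemma dotvBr u v w : dotv u (v - w) = dotv u v - dotv u w.
Proof. by rewrite dotvDr dotvNr. Qed.

Lemma dotv0l v : dotv 0 v = 0.
Proof. by rewrite -(scale0r 0) dotvZl mul0r. Qed.

Lemma dotv0r u : dotv u 0 = 0.
Proof. by rewrite dotvC dotv0l. Qed.

Lemma dotv_suml (T : Type) (s : seq T) (F : T -> vec) v :
  dotv (\sum_(p <- s) F p) v = \sum_(p <- s) dotv (F p) v.
Proof. by elim/big_rec2: _ => [|p x y _ <-]; rewrite ?dotv0l ?dotvDl. Qed.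

Lemma dotv_sumr (T : Type) (s : seq T) (F : T -> vec) u :
  dotv u (\sum_(p <- s) F p) = \sum_(p <- s) dotv u (F p).
Proof. by elim/big_rec2: _ => [|p x y _ <-]; rewrite ?dotv0r ?dotvDr. Qed.

Lemma dotvv_ge0 u : 0 <= dotv u u.
Proof. by apply: sumr_ge0 => i _; rewrite -expr2 sqr_ge0. Qed.

Lemma dotvv_eq0 u : (dotv u u == 0) = (u == 0).
Proof.
apply/eqP/eqP => [uu0|->]; last exact: dotv0l.
apply/rowP => i; rewrite mxE; apply/eqP; rewrite -sqrf_eq0 expr2.
have sq_ge0 j : 0 <= u 0 j * u 0 j by rewrite -expr2 sqr_ge0.
by rewrite (psumr_eq0P (fun j _ => sq_ge0 j) uu0).
Qed.

Lemma dotvv_gt0 u : (0 < dotv u u) = (u != 0).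
Proof. by rewrite lt_def dotvv_ge0 dotvv_eq0 andbT. Qed.

Lemma enorm_ge0 u : 0 <= enorm u.
Proof. exact: sqrtr_ge0. Qed.

Lemma sqr_enorm u : enorm u ^+ 2 = dotv u u.
Proof. by rewrite sqr_sqrtr // dotvv_ge0. Qed.

Lemma enorm_gt0 u : (0 < enorm u) = (u != 0).
Proof. by rewrite sqrtr_gt0 dotvv_gt0. Qed.

Lemma enorm0 : enorm (0 : vec) = 0.
Proof. by rewrite /enorm dotv0l sqrtr0. Qed.

Lemma enormN u : enorm (- u) = enorm u.
Proof. by rewrite /enorm dotvNl dotvNr opprK. Qed.

Lemma enormZ c u : 0 <= c -> enorm (c *: u) = c * enorm u.
Proof.
move=> c0; rewrite /enorm dotvZl dotvZr mulrA -expr2 sqrtrM ?sqr_ge0 //.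
by rewrite sqrtr_sqr ger0_norm.
Qed.

Lemma sqr_enormB u v :
  enorm (u - v) ^+ 2 = enorm u ^+ 2 - 2 * dotv u v + enorm v ^+ 2.
Proof. by rewrite !sqr_enorm dotvBl !dotvBr (dotvC v u); ring. Qed.

Lemma dotv_le_enorm u v : dotv u v <= enorm u * enorm v.
Proof.
have [->|u0] := eqVneq u 0; first by rewrite dotv0l mulr_ge0 ?enorm_ge0.
have [->|v0] := eqVneq v 0; first by rewrite dotv0r mulr_ge0 ?enorm_ge0.
have := dotvv_ge0 (enorm v *: u - enorm u *: v).
rewrite dotvBl !dotvBr !dotvZl !dotvZr -!sqr_enorm (dotvC v u).
have := enorm_gt0 u; have := enorm_gt0 v; rewrite u0 v0.
set A := enorm u; set B := enorm v => B0 A0 h.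
have : 0 <= (A * B) * (2 * (A * B - dotv u v)) by nra.
by rewrite pmulr_rge0 ?mulr_gt0 //; lra.
Qed.

Lemma dotv_ge_enorm u v : - (enorm u * enorm v) <= dotv u v.
Proof. by have := dotv_le_enorm u (- v); rewrite dotvNr enormN; lra. Qed.

Lemma ler_enormD u v : enorm (u + v) <= enorm u + enorm v.
Proof.
rewrite -(ler_pXn2r (n := 2)) ?nnegrE ?addr_ge0 ?enorm_ge0 //.
rewrite sqr_enorm dotvDl !dotvDr -!sqr_enorm (dotvC v u).
have := dotv_le_enorm u v; lra.
Qed.

Lemma ler_enorm_sum (T : Type) (s : seq T) (F : T -> vec) :
  enorm (\sum_(p <- s) F p) <= \sum_(p <- s) enorm (F p).
Proof.
elim/big_rec2: _ => [|p x y _ hxy]; first by rewrite enorm0.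
by apply: le_trans (ler_enormD _ _) _; rewrite lerD2l.
Qed.

Definition normalize u : vec := (enorm u)^-1 *: u.

Lemma dotv_normalize u v :
  dotv (normalize u) (normalize v) = dotv u v / (enorm u * enorm v).
Proof. by rewrite dotvZl dotvZr invfM; ring. Qed.

Lemma enorm_normalize u : u != 0 -> enorm (normalize u) = 1.
Proof.
rewrite -enorm_gt0 => u0.
by rewrite enormZ ?invr_ge0 ?ltW // mulVf ?gt_eqF.
Qed.

Lemma dotv_normalizevv u : u != 0 -> dotv (normalize u) (normalize u) = 1.
Proof. by move/enorm_normalize; rewrite -sqr_enorm => ->; rewrite expr1n. Qed.

Lemma normalize_dotv_ge lam a b : -1 <= lam <= 1 -> a != 0 -> b != 0 ->
  enorm (a - b) <= enorm a + lam * enorm b ->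
  - lam <= dotv (normalize a) (normalize b).
Proof.
case/andP=> lam_ge lam_le; rewrite -!enorm_gt0 => A0 B0 lc.
rewrite dotv_normalize ler_pdivlMr ?mulr_gt0 //.
have := sqr_enormB a b; have := enorm_ge0 (a - b).
set A := enorm a in A0 lc *; set B := enorm b in B0 lc *.
set E := enorm (a - b) in lc * => E0 hE.
have : E ^+ 2 <= (A + lam * B) ^+ 2 by rewrite ler_pXn2r ?nnegrE //; lra.
have : 0 <= (1 - lam) * (1 + lam) * B ^+ 2 by rewrite !mulr_ge0 ?sqr_ge0 //; lra.
nra.
Qed.

Lemma normalize_dotv_le lam a b : lam <= 1 -> a != 0 -> b != 0 ->
  enorm b <= enorm a -> enorm a <= enorm (a - b) + lam * enorm b ->
  dotv (normalize a) (normalize b) <= lam + enorm b / (2 * enorm a).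
Proof.
rewrite -!enorm_gt0 => lam_le A0 B0 BA lc.
rewrite dotv_normalize ler_pdivrMr ?mulr_gt0 //.
have := sqr_enormB a b.
set A := enorm a in A0 BA lc *; set B := enorm b in B0 BA lc *.
set E := enorm (a - b) in lc * => hE.
have : (A - lam * B) ^+ 2 <= E ^+ 2.
  by rewrite ler_pXn2r ?nnegrE ?enorm_ge0 //; nra.
have -> : (lam + B / (2 * A)) * (A * B) = lam * A * B + B ^+ 2 / 2.
  by field; rewrite gt_eqF.
nra.
Qed.

Lemma cone_hull_dotv_ge (S : vec -> Prop) m rho : 0 <= rho ->
  (forall v, S v -> rho * enorm v <= dotv m v) ->
  forall v, cone_hull S v -> rho * enorm v <= dotv m v.
Proof.
move=> rho0 mS _ [n [c [w [c0 [Sw ->]]]]].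
apply: (le_trans (ler_wpM2l rho0 (ler_enorm_sum _ _))).
rewrite dotv_sumr mulr_sumr; apply: ler_sum => i _.
by rewrite enormZ // dotvZr mulrCA ler_wpM2l ?mS.
Qed.

Lemma eclosure_dotv_ge (S : vec -> Prop) m rho : 0 <= rho ->
  (forall v, S v -> rho * enorm v <= dotv m v) ->
  forall u, eclosure S u -> rho * enorm u <= dotv m u.
Proof.
move=> rho0 mS u Su; apply/ler_addgt0Pr => e e0.
have k0 : 0 < rho + enorm m + 1 by have := enorm_ge0 m; lra.
have [w /mS mw uw] := Su _ (divr_gt0 e0 k0).
have uwe : enorm (u - w) * (rho + enorm m + 1) < e by rewrite -ltr_pdivlMr.
have := ler_enormD w (u - w); rewrite addrC subrK => tri.
have := dotv_ge_enorm m (u - w); rewrite dotvBr.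
have := enorm_ge0 (u - w); have := enorm_ge0 m.
nra.
Qed.

(* Optimality of a near-minimiser m of the squared norm over a convex set,
   tested at the point m + (e/8)(x - m) of that set. *)
Lemma near_min_dotv_ge m x (e : R) :
  0 < e <= 1 -> e <= dotv m m -> dotv x x = 1 ->
  dotv m m < dotv (e / 8 *: x + (1 - e / 8) *: m) (e / 8 *: x + (1 - e / 8) *: m)
             + e ^+ 2 / 32 ->
  e / 2 <= dotv m x.
Proof.
case/andP=> e0 e1 em x1.
rewrite dotvDl !dotvDr !dotvZl !dotvZr x1 (dotvC x m).
set A := dotv m m in em *; set B := dotv m x => near_min.
have h1 : e * (e / 8) * (2 - e / 8) <= A * (e / 8) * (2 - e / 8).
  by rewrite ler_pM2r ?ler_pM2r; lra.
have h2 : e * (3 * e / 4) < e * ((1 - e / 8) * B) by nra.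
rewrite ltr_pM2l // in h2.
nra.
Qed.

End Euclid.

Section Moments.
Variable R : realType.

Lemma sqr_sum_le n (x : 'I_n -> R) :
  (\sum_(i < n) x i) ^+ 2 <= n%:R * \sum_(i < n) x i ^+ 2.
Proof.
case: n x => [|n] x; first by rewrite !big_ord0 mul0r expr0n.
set S := \sum_(i < n.+1) x i; set S2 := \sum_(i < n.+1) x i ^+ 2.
have : 0 <= \sum_(i < n.+1) (x i *+ n.+1 - S) ^+ 2.
  by apply: sumr_ge0 => i _; exact: sqr_ge0.
have -> : \sum_(i < n.+1) (x i *+ n.+1 - S) ^+ 2 = n.+1%:R * (n.+1%:R * S2 - S ^+ 2).
  rewrite (eq_bigr (fun i => n.+1%:R ^+ 2 * x i ^+ 2 - 2 * n.+1%:R * S * x i + S ^+ 2));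
    last by move=> i _; rewrite -mulr_natr; ring.
  rewrite big_split sumrB /= -!mulr_sumr sumr_const card_ord -/S -/S2.
  by rewrite -mulr_natr; ring.
by rewrite pmulr_rge0 ?ltr0n // subr_ge0.
Qed.

Lemma sqr_mxtrace_le n (A : 'M[R]_n) :
  (\tr A) ^+ 2 <= n%:R * \sum_i \sum_j A i j ^+ 2.
Proof.
apply: le_trans (sqr_sum_le _) _; rewrite ler_wpM2l ?ler0n //.
apply: ler_sum => i _; rewrite (bigD1 i) //= lerDl.
by apply: sumr_ge0 => j _; exact: sqr_ge0.
Qed.

Variable d : nat.
Notation vec := 'rV[R]_d.
Implicit Type s : seq (R * vec).

Definition moment_mx s : 'M[R]_d :=
  \matrix_(i, j) \sum_(p <- s) p.1 * (p.2 0 i * p.2 0 j).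

Lemma mxtrace_moment s : \tr (moment_mx s) = \sum_(p <- s) p.1 * dotv p.2 p.2.
Proof.
rewrite /mxtrace; under eq_bigr do rewrite mxE.
rewrite exchange_big /=.
by apply: eq_bigr => p _; rewrite /dotv mulr_sumr.
Qed.

Lemma sum_sqr_moment s : \sum_i \sum_j moment_mx s i j ^+ 2 =
  \sum_(p <- s) \sum_(q <- s) p.1 * q.1 * dotv p.2 q.2 ^+ 2.
Proof.
transitivity (\sum_i \sum_j \sum_(p <- s) \sum_(q <- s)
    p.1 * (p.2 0 i * p.2 0 j) * (q.1 * (q.2 0 i * q.2 0 j))).
  apply: eq_bigr => i _; apply: eq_bigr => j _.
  by rewrite mxE expr2 mulr_suml; apply: eq_bigr => p _; rewrite mulr_sumr.
under eq_bigr do rewrite exchange_big /=.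
rewrite exchange_big; apply: eq_bigr => p _ /=.
under eq_bigr do rewrite exchange_big /=.
rewrite exchange_big; apply: eq_bigr => q _ /=.
rewrite expr2 /dotv mulr_suml mulr_sumr; apply: eq_bigr => i _.
rewrite !mulr_sumr; apply: eq_bigr => j _; ring.
Qed.

Definition barycenter s : vec := \sum_(p <- s) p.1 *: p.2.

Lemma dotv_barycenter s : dotv (barycenter s) (barycenter s) =
  \sum_(p <- s) \sum_(q <- s) p.1 * q.1 * dotv p.2 q.2.
Proof.
rewrite dotv_suml; apply: eq_bigr => p _.
rewrite dotvZl dotv_sumr mulr_sumr; apply: eq_bigr => q _.
by rewrite dotvZr mulrA.
Qed.

Lemma barycenter_cons s (c : R) x :
  barycenter ((c, x) :: [seq ((1 - c) * p.1, p.2) | p <- s]) =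
  c *: x + (1 - c) *: barycenter s.
Proof.
rewrite /barycenter big_cons big_map scaler_sumr; congr (_ + _).
by apply: eq_bigr => p _; rewrite scalerA.
Qed.

End Moments.

Definition margin (R : realType) (d : nat) (lam : R) := (d%:R^-1 - lam) / (1 - lam).

Lemma invn_le1 (R : realType) (n : nat) : n%:R^-1 <= 1 :> R.
Proof. by case: n => [|n]; rewrite ?invr0 ?ler01 // invf_le1 ?ltr0Sn ?ler1n. Qed.

Section Separation.
Variables (R : realType) (d : nat) (lam : R) (U : 'rV[R]_d -> Prop).
Notation vec := 'rV[R]_d.
Hypotheses (lam_lt : lam < d%:R^-1)
  (U_unit : forall x, U x -> dotv x x = 1)
  (U_pair : forall x y, U x -> U y -> - lam <= dotv x y).

Lemma lam_lt1 : lam < 1.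
Proof. exact: lt_le_trans lam_lt (invn_le1 _ _). Qed.

Lemma margin_gt0 : 0 < margin d lam.
Proof. by rewrite divr_gt0 // subr_gt0 // lam_lt1. Qed.

Lemma margin_le1 : margin d lam <= 1.
Proof.
rewrite ler_pdivrMr ?subr_gt0 ?lam_lt1 // mul1r.
by have := invn_le1 R d; lra.
Qed.

Lemma U_dotv_le1 x y : U x -> U y -> dotv x y <= 1.
Proof.
move=> /U_unit x1 /U_unit y1; have := dotv_le_enorm x y.
by rewrite /enorm x1 y1 sqrtr1 mulr1.
Qed.

Definition convex_weights (s : seq (R * vec)) : Prop :=
  (forall p, p \in s -> 0 <= p.1 /\ U p.2) /\ \sum_(p <- s) p.1 = 1.

Lemma convex_weights_cons s c x : convex_weights s -> U x -> 0 <= c <= 1 ->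
  convex_weights ((c, x) :: [seq ((1 - c) * p.1, p.2) | p <- s]).
Proof.
move=> [s_in s1] Ux /andP[c0 c1]; split.
  move=> p; rewrite inE => /predU1P[-> //|/mapP[p' /s_in[p'0 Up'] ->]] /=.
  by split=> //; rewrite mulr_ge0 ?subr_ge0.
by rewrite big_cons big_map /= -mulr_sumr s1 mulr1 addrC subrK.
Qed.

Lemma enorm_barycenter_le1 s : convex_weights s -> enorm (barycenter s) <= 1.
Proof.
move=> [s_in s1]; apply: le_trans (ler_enorm_sum _ _) _.
rewrite -s1 big_seq [leRHS]big_seq; apply: ler_sum => p /s_in[p0 /U_unit p1].
by rewrite enormZ // /enorm p1 sqrtr1 mulr1.
Qed.

Lemma margin_le_dotv_barycenter s :
  convex_weights s -> margin d lam <= dotv (barycenter s) (barycenter s).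
Proof.
move=> [s_in s1].
have trace1 : \sum_(p <- s) p.1 * dotv p.2 p.2 = 1.
  rewrite -s1 !big_seq; apply: eq_bigr => p /s_in[_ /U_unit ->]; exact: mulr1.
have := sqr_mxtrace_le (moment_mx s).
rewrite mxtrace_moment sum_sqr_moment trace1 expr1n => gram.
have sqr_le_lin : \sum_(p <- s) \sum_(q <- s) p.1 * q.1 * dotv p.2 q.2 ^+ 2 <=
    \sum_(p <- s) \sum_(q <- s) p.1 * q.1 * ((1 - lam) * dotv p.2 q.2 + lam).
  rewrite big_seq [leRHS]big_seq; apply: ler_sum => p ps.
  rewrite big_seq [leRHS]big_seq; apply: ler_sum => q qs.
  have [p0 Up] := s_in p ps; have [q0 Uq] := s_in q qs.
  rewrite ler_wpM2l ?mulr_ge0 //.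
  by have := U_pair Up Uq; have := U_dotv_le1 Up Uq; nra.
have lin : \sum_(p <- s) \sum_(q <- s) p.1 * q.1 * ((1 - lam) * dotv p.2 q.2 + lam)
    = (1 - lam) * dotv (barycenter s) (barycenter s) + lam.
  rewrite dotv_barycenter; set k := 1 - lam.
  rewrite -[in RHS](mulr1 lam) -[in RHS]s1 !mulr_sumr -big_split.
  apply: eq_bigr => p _ /=.
  rewrite -[in RHS](mulr1 (lam * p.1)) -[in RHS]s1 !mulr_sumr -big_split.
  by apply: eq_bigr => q _ /=; ring.
have d0 : (0 < d)%N.
  rewrite lt0n; apply/negP => /eqP d0.
  by move: gram; rewrite (_ : d%:R = 0) ?d0 // mul0r; lra.
have := le_trans gram (ler_wpM2l (ler0n _ d) sqr_le_lin).
rewrite lin -ler_pdivrMl ?ltr0n // mulr1.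
rewrite /margin ler_pdivrMr ?subr_gt0 ?lam_lt1 //; lra.
Qed.

Lemma separating_unit_vector x0 : U x0 ->
  exists2 xi : vec, enorm xi = 1 & forall x, U x -> margin d lam / 2 <= dotv xi x.
Proof.
move=> Ux0; have e0 := margin_gt0; have e1 := margin_le1.
set e := margin d lam in e0 e1 *.
pose E : set R :=
  fun r => exists2 s, convex_weights s & r = dotv (barycenter s) (barycenter s).
have E_inf : has_inf E.
  split; last by exists 0 => _ [s _ ->]; exact: dotvv_ge0.
  exists (dotv (barycenter [:: (1, x0)]) (barycenter [:: (1, x0)])).
  exists [:: (1, x0)] => //; split; last by rewrite big_seq1.
  by move=> p; rewrite inE => /eqP ->; split.
have [_ [s s_w ->] s_min] :=
  inf_adherent (divr_gt0 (exprn_gt0 2 e0) (ltr0n _ 32)) E_inf.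
have m_ge := margin_le_dotv_barycenter s_w; have m_le1 := enorm_barycenter_le1 s_w.
set m := barycenter s in s_min m_ge m_le1.
have m_sep x : U x -> e / 2 <= dotv m x.
  move=> Ux; apply: near_min_dotv_ge m_ge (U_unit Ux) _; first by rewrite e0.
  apply: (lt_le_trans s_min); rewrite lerD2r -barycenter_cons.
  apply: (ge_inf (proj2 E_inf)).
  exists ((e / 8, x) :: [seq ((1 - e / 8) * p.1, p.2) | p <- s]) => //.
  by apply: convex_weights_cons => //; apply/andP; split; lra.
have m0 : 0 < enorm m by rewrite enorm_gt0 -dotvv_gt0 (lt_le_trans e0 m_ge).
exists (normalize m); first by rewrite enorm_normalize // -enorm_gt0.
move=> x Ux; have := m_sep x Ux; rewrite dotvZl.
have : 1 <= (enorm m)^-1 by rewrite invf_ge1.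
nra.
Qed.

End Separation.

Section Chords.
Variables (R : realType) (d : nat) (lam : R) (I : R -> Prop) (gamma : R -> 'rV[R]_d).
Notation vec := 'rV[R]_d.

Definition past_chord_dir (t : R) (x : vec) : Prop :=
  exists t', [/\ I t', t' <= t, gamma t' != gamma t & x = normalize (gamma t' - gamma t)].

Lemma past_chord_dir_unit t x : past_chord_dir t x -> dotv x x = 1.
Proof. by case=> t' [_ _ nz ->]; rewrite dotv_normalizevv // subr_eq0. Qed.

Lemma Kcone_dotv_ge t (m : vec) rho : 0 <= rho ->
  (forall x, past_chord_dir t x -> rho <= dotv m x) ->
  forall u, Kcone I gamma t u -> rho * enorm u <= dotv m u.
Proof.
move=> rho0 m_sep; apply: eclosure_dotv_ge => //.
apply: cone_hull_dotv_ge => // _ [t' [It' t't ->]].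
have [->|nz] := eqVneq (gamma t') (gamma t).
  by rewrite subrr enorm0 mulr0 dotv0r.
have := m_sep _ (ex_intro _ t' (And4 It' t't nz erefl)).
by rewrite dotvZr mulrC ler_pdivlMr ?enorm_gt0 ?subr_eq0.
Qed.

Lemma sec_plus_approx t q : continuous_on I gamma -> I t -> sec_plus I gamma t q ->
  forall e1 e2, 0 < e1 -> 0 < e2 -> exists s, [/\ I s, t <= s, gamma s != gamma t,
    enorm (gamma s - gamma t) < e1 & enorm (normalize (gamma s - gamma t) - q) < e2].
Proof.
move=> cont It [_ [tk [tk_in [tk_t dir_q]]]] e1 e2 e10 e20.
have [del del0 near_t] := cont t It e1 e10.
have [N1 hN1] := tk_t del del0; have [N2 hN2] := dir_q e2 e20.
have [Ik [tk_gt nz]] := tk_in (maxn N1 N2).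
exists (tk (maxn N1 N2)); split=> //; first exact: ltW.
  by apply: near_t => //; apply: hN1; exact: leq_maxl.
by apply: hN2; exact: leq_maxr.
Qed.

Hypotheses (lam_ge : -1 <= lam) (lam_le1 : lam <= 1)
  (gamma_lc : lambda_curve lam I gamma).

Lemma past_chord_dir_dotv_ge t x y : I t ->
  past_chord_dir t x -> past_chord_dir t y -> - lam <= dotv x y.
Proof.
move=> It [t1 [It1 t1t n1 ->]] [t2 [It2 t2t n2 ->]].
wlog t12 : t1 t2 It1 It2 t1t t2t n1 n2 / t1 <= t2.
  move=> wlog; case: (leP t1 t2) => [|/ltW] t12; first exact: wlog.
  by rewrite dotvC; apply: wlog.
apply: normalize_dotv_ge; rewrite ?lam_ge ?subr_eq0 //.
by rewrite opprB addrA subrK; apply: gamma_lc.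
Qed.

Lemma past_chord_dir_sec_plus_le t q x : continuous_on I gamma -> I t ->
  sec_plus I gamma t q -> past_chord_dir t x -> dotv x q <= lam.
Proof.
move=> cont It q_sec [t' [It' t't nz ->]].
set a := gamma t' - gamma t; have a0 : a != 0 by rewrite subr_eq0.
have A0 : 0 < enorm a by rewrite enorm_gt0.
apply/ler_addgt0Pr => e e0.
have e10 : 0 < enorm a * e / (1 + e) by rewrite divr_gt0 ?mulr_gt0 //; lra.
have [s [Is ts nzs b_small dir_close]] :=
  sec_plus_approx cont It q_sec e10 (divr_gt0 e0 (ltr0n _ 2)).
set b := gamma s - gamma t in b_small dir_close.
have b0 : b != 0 by rewrite subr_eq0.
have B0 := enorm_ge0 b.
rewrite ltr_pdivlMr in b_small; last by lra.
have BA : enorm b <= enorm a by nra.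
have lc : enorm a <= enorm (a - b) + lam * enorm b.
  have -> : a - b = gamma t' - gamma s by rewrite opprB addrA subrK.
  have -> : enorm b = enorm (gamma t - gamma s) by rewrite -enormN opprB.
  exact: gamma_lc.
have := normalize_dotv_le lam_le1 a0 b0 BA lc.
have := dotv_ge_enorm (normalize a) (normalize b - q).
rewrite dotvBr enorm_normalize // mul1r.
have : enorm b / (2 * enorm a) <= e / 2.
  by rewrite ler_pdivrMr ?mulr_gt0 //; nra.
lra.
Qed.

Definition chord_family t q x := past_chord_dir t x \/ x = - q.

Lemma chord_family_unit t q : on_sphere q ->
  forall x, chord_family t q x -> dotv x x = 1.
Proof.
move=> q1 x [/past_chord_dir_unit // | ->].
by rewrite dotvNl dotvNr opprK -sqr_enorm q1 expr1n.
Qed.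

Lemma chord_family_dotv_ge t q : continuous_on I gamma -> I t ->
  sec_plus I gamma t q ->
  forall x y, chord_family t q x -> chord_family t q y -> - lam <= dotv x y.
Proof.
move=> cont It q_sec x y [Px | ->] [Py | ->].
- exact: past_chord_dir_dotv_ge Px Py.
- by rewrite dotvNr lerN2 (past_chord_dir_sec_plus_le cont It q_sec Px).
- by rewrite dotvNl lerN2 dotvC (past_chord_dir_sec_plus_le cont It q_sec Py).
- by rewrite dotvNl dotvNr opprK -sqr_enorm q_sec.1 expr1n lerNl.
Qed.

End Chords.

Unset Implicit Arguments. Set Strict Implicit.

Theorem lemma3p4 (R : realType) (d : nat) (lam : R) (I : R -> Prop)
  (gamma : R -> 'rV[R]_d) :
  -1 <= lam -> lam < 1 / d%:R ->
  is_interval_set I ->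
  continuous_on I gamma ->
  lambda_curve lam I gamma ->
  exists2 rho : R, 0 < rho &
    forall t, I t -> forall q, sec_plus I gamma t q ->
      exists xi : 'rV[R]_d,
        [/\ on_sphere xi,
            (forall u, Kcone I gamma t u -> enorm u = 1 -> dotv xi u <= - rho)
          & rho <= dotv xi q].
Proof.
move=> lam_ge; rewrite div1r => lam_lt _ gamma_cont gamma_lc.
have lam_le1 := ltW (lam_lt1 lam_lt).
exists (margin d lam / 2); first by rewrite divr_gt0 ?margin_gt0.
move=> t It q q_sec.
have [xi xi1 xi_sep] := separating_unit_vector lam_lt
  (chord_family_unit (t := t) q_sec.1) (chord_family_dotv_ge lam_ge lam_le1 gamma_lc gamma_cont It q_sec)
  (or_intror erefl).
exists (- xi); split.
- by rewrite /on_sphere enormN.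
- move=> u Ku u1; rewrite dotvNl lerN2.
  have rho0 : 0 <= margin d lam / 2 by rewrite divr_ge0 ?ltW ?margin_gt0.
  have := Kcone_dotv_ge rho0 (fun x Px => xi_sep x (or_introl Px)) Ku.
  by rewrite u1 mulr1.
- by rewrite dotvNl -dotvNr; apply: xi_sep; right.
Qed.
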